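(* Consider any sequences evolved by Algorithm 1 and let $d_0:=\|x^*-x^0\|$. Then: (a) for all $k\ge1$ and $x\in\mathcal H$, $A_k[h(y^k)-h(x)]+\frac{1-\sigma^2}{2}\sum_{j=1}^k\frac{A_j}{\lambda_j}\|y^j-\tilde x^{j-1}\|^2+\sum_{j=1}^k\frac{\mu(1+\mu A_{j-1})\lambda_jA_{j-1}}{2a_j}\|x^{j-1}-y^{j-1}\|^2+\frac{1+\mu A_k}{2}\|x-x^k\|^2\le\frac12\|x-x^0\|^2$; (b) if $\sigma<1$, then for all $k\ge1$, $\sum_{j=1}^k\frac{A_j}{\lambda_j}\|y^j-\tilde x^{j-1}\|^2\le\frac{d_0^2}{1-\sigma^2}$.
   Context: Setting: $\mathcal H$ is a finite-dimensional real inner product space with inner product $\langle\cdot,\cdot\rangle$ and norm $\|\cdot\|$. $f,g:\mathcal H\to(-\infty,\infty]$ are proper, closed, convex functions, $h:=f+g$ has nonempty domain, and $g$ is $\mu$-strongly convex for some $\mu>0$, i.e. $g(tx+(1-t)y)\le tg(x)+(1-t)g(y)-\frac{\mu}{2}t(1-t)\|x-y\|^2$ for all $x,y\in\mathcal H$, $t\in[0,1]$. $x^*$ denotes the unique minimizer of $h$. For $\varepsilon\ge 0$, $\partial_\varepsilon f(y):=\{u\in\mathcal H: f(w)\ge f(y)+\langle u,w-y\rangle-\varepsilon\ \forall w\in\mathcal H\}$, and $\partial g:=\partial_0 g$. Algorithm 1: Choose $x^0,y^0\in\mathcal H$ and $\sigma\in[0,1]$, and set $A_0=0$. For $k=0,1,2,\dots$: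 choose $\lambda_{k+1}>0$, set $a_{k+1}=\frac{(1+2\mu A_k)\lambda_{k+1}+\sqrt{(1+2\mu A_k)^2\lambda_{k+1}^2+4(1+\mu A_k)A_k\lambda_{k+1}}}{2}$ and $\tilde x^k=\frac{a_{k+1}-\mu A_k\lambda_{k+1}}{A_k+a_{k+1}}x^k+\frac{A_k+\mu A_k\lambda_{k+1}}{A_k+a_{k+1}}y^k$; compute $(y^{k+1},v^{k+1},\varepsilon_{k+1})\in\mathcal H\times\mathcal H\times[0,\infty)$ such that $v^{k+1}\in\partial_{\varepsilon_{k+1}}f(y^{k+1})+\partial g(y^{k+1})$ and $\frac{\|\lambda_{k+1}v^{k+1}+y^{k+1}-\tilde x^k\|^2}{1+\lambda_{k+1}\mu}+2\lambda_{k+1}\varepsilon_{k+1}\le\sigma^2\|y^{k+1}-\tilde x^k\|^2$; then set $A_{k+1}=A_k+a_{k+1}$ and $x^{k+1}=\frac{1+\mu A_k}{1+\mu A_{k+1}}x^k+\frac{\mu a_{k+1}}{1+\mu A_{k+1}}y^{k+1}-\frac{a_{k+1}}{1+\mu A_{k+1}}v^{k+1}$. ''Sequences evolved by Algorithm 1'' means any sequences satisfying all these relations for every $k\ge 0$. *)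

From HB Require Import structures.
From mathcomp Require Import all_boot all_order all_algebra.
From mathcomp Require Import all_classical all_reals all_analysis.
From mathcomp Require Import matrix_topology.
Import numFieldTopology.Exports numFieldNormedType.Exports.
Set Implicit Arguments. Unset Strict Implicit. Unset Printing Implicit Defensive.
Import Order.TTheory GRing.Theory Num.Theory.
Local Open Scope ring_scope.

(* The finite-dimensional real inner product space H is modelled as
   'rV[R]_n (n arbitrary) with the Euclidean inner product; every
   finite-dimensional real inner product space is isometric to such a space. *)
Definition ip {R : realType} {n : nat} (u v : 'rV[R]_n) : R :=
  \sum_(i < n) u ord0 i * v ord0 i.
Definition nrm {R : realType} {n : nat} (u : 'rV[R]_n) : R := Num.sqrt (ip u u).

Local Open Scope ereal_scope.

Definition proper_fun {R : realType} {n : nat} (f : 'rV[R]_n -> \bar R) : Prop :=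
  (forall x, f x != -oo) /\ (exists x, f x \is a fin_num).

Definition convex_fun {R : realType} {n : nat} (f : 'rV[R]_n -> \bar R) : Prop :=
  forall (x y : 'rV[R]_n) (t : R), (0 <= t <= 1)%R ->
    f (t *: x + (1 - t) *: y)%R <= t%:E * f x + (1 - t)%:E * f y.

Definition strongly_convex {R : realType} {n : nat} (mu : R)
    (g : 'rV[R]_n -> \bar R) : Prop :=
  forall (x y : 'rV[R]_n) (t : R), (0 <= t <= 1)%R ->
    g (t *: x + (1 - t) *: y)%R <=
      t%:E * g x + (1 - t)%:E * g y - (mu / 2 * t * (1 - t) * nrm (x - y) ^+ 2)%:E.

Definition closed_fun {R : realType} {n : nat} (f : 'rV[R]_n -> \bar R) : Prop :=
  lower_semicontinuous f.

Definition eps_subdiff {R : realType} {n : nat} (f : 'rV[R]_n -> \bar R)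
    (eps : R) (y u : 'rV[R]_n) : Prop :=
  forall w : 'rV[R]_n, f w >= f y + (ip u (w - y) - eps)%:E.

Definition in_sum_subdiff {R : realType} {n : nat} (f g : 'rV[R]_n -> \bar R)
    (eps : R) (y v : 'rV[R]_n) : Prop :=
  exists u1 u2, eps_subdiff f eps y u1 /\ eps_subdiff g 0 y u2 /\ v = (u1 + u2)%R.

Local Close Scope ereal_scope.

Definition algorithm1 {R : realType} {n : nat} (f g : 'rV[R]_n -> \bar R)
    (mu sigma : R) (x y xt v : nat -> 'rV[R]_n) (eps lam a A : nat -> R) : Prop :=
  0 <= sigma <= 1 /\ A 0%N = 0 /\
  forall k : nat,
    0 < lam k.+1 /\
    [/\ a k.+1 = ((1 + 2 * mu * A k) * lam k.+1 +
                  Num.sqrt ((1 + 2 * mu * A k) ^+ 2 * lam k.+1 ^+ 2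
                            + 4 * (1 + mu * A k) * A k * lam k.+1)) / 2,
        xt k = ((a k.+1 - mu * A k * lam k.+1) / (A k + a k.+1)) *: x k
             + ((A k + mu * A k * lam k.+1) / (A k + a k.+1)) *: y k,
        [/\ in_sum_subdiff f g (eps k.+1) (y k.+1) (v k.+1),
            0 <= eps k.+1 &
            nrm (lam k.+1 *: v k.+1 + y k.+1 - xt k) ^+ 2 / (1 + lam k.+1 * mu)
              + 2 * lam k.+1 * eps k.+1 <= sigma ^+ 2 * nrm (y k.+1 - xt k) ^+ 2],
        A k.+1 = A k + a k.+1 &
        x k.+1 = ((1 + mu * A k) / (1 + mu * A k.+1)) *: x k
               + (mu * a k.+1 / (1 + mu * A k.+1)) *: y k.+1
               - (a k.+1 / (1 + mu * A k.+1)) *: v k.+1].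

(* Write [y = y_{k+1}], [v = v_{k+1}], [e = eps_{k+1}].  Since
   [v \in d_e f(y) + dg(y)] and [g] is [mu]-strongly convex, [h] admits the
   lower model  h(w) >= h(y) + <v, w - y> - e + mu/2 |w - y|^2  on its domain.
   Applying it at [w = y_k] with weight [A_k] and at the reference point
   [w = z] with weight [a_{k+1}], adding the relative error criterion of the
   algorithm, and using an exact algebraic identity that encodes the update
   rules of [xt_k], [x_{k+1}] and the quadratic equation defining [a_{k+1}],
   shows that the potential of part (a) does not increase from [k] to [k+1];
   induction from [A_0 = 0] gives (a).  Part (b) follows by taking [z] to be
   the minimizer and dropping the nonnegative terms. *)

From HB Require Import structures.
From mathcomp Require Import all_boot all_order all_algebra.
From mathcomp Require Import all_classical all_reals all_analysis.
From mathcomp Require Import ring lra.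
Import numFieldTopology.Exports numFieldNormedType.Exports.
Import Order.TTheory GRing.Theory Num.Theory.
Set Implicit Arguments. Unset Strict Implicit. Unset Printing Implicit Defensive.
Local Open Scope ring_scope.

Section InnerProduct.
Variables (R : realType) (n : nat).
Implicit Types (u w : 'rV[R]_n).

Lemma ip_ge0 u : 0 <= ip u u.
Proof. by apply: sumr_ge0 => i _; rewrite -expr2 sqr_ge0. Qed.

Lemma nrm_sqr u : nrm u ^+ 2 = ip u u.
Proof. by rewrite /nrm sqr_sqrtr // ip_ge0. Qed.

Lemma ipDl u1 u2 w : ip (u1 + u2) w = ip u1 w + ip u2 w.
Proof. by rewrite /ip -big_split /=; apply: eq_bigr => i _; rewrite !mxE mulrDl. Qed.

Lemma ipZr u t w : ip u (t *: w) = t * ip u w.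
Proof. by rewrite /ip mulr_sumr; apply: eq_bigr => i _; rewrite !mxE mulrCA. Qed.

End InnerProduct.

Section RealFacts.
Variable R : realType.

(* If [c (1 - t) <= X] for every [t] in (0,1], then [c <= X]: the
   limiting step t -> 0 used to extract a first-order condition. *)
Lemma le_of_forall_scaled (X c : R) :
  0 <= c -> (forall t, 0 < t <= 1 -> c * (1 - t) <= X) -> c <= X.
Proof.
move=> hc h; rewrite leNgt; apply/negP => hX.
have hX0 : 0 <= X by have := h 1; rewrite subrr mulr0 lexx ltr01; apply.
have hc0 : 0 < c by lra.
have ht : 0 < (c - X) / (2 * c) <= 1.
  apply/andP; split; first by apply: divr_gt0; lra.
  by rewrite ler_pdivrMr ?mul1r; lra.
have := h _ ht.
have -> : c * (1 - (c - X) / (2 * c)) = (c + X) / 2 by field; rewrite gt_eqF.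
lra.
Qed.

(* The larger root of [r^2 = b r + c]; this is how Algorithm 1 chooses
   the step weight [a_{k+1}]. *)
Lemma quadratic_root (b c r : R) : 0 < b -> 0 <= c ->
  r = (b + Num.sqrt (b ^+ 2 + 4 * c)) / 2 -> 0 < r /\ r ^+ 2 = b * r + c.
Proof.
move=> hb hc ->.
have hdisc : 0 <= b ^+ 2 + 4 * c by apply: addr_ge0; [exact: sqr_ge0 | lra].
have hq2 := sqr_sqrtr hdisc; have hq0 := sqrtr_ge0 (b ^+ 2 + 4 * c).
move: (Num.sqrt _) hq2 hq0 => q hq2 hq0.
split; first by apply: divr_gt0; lra.
have -> : ((b + q) / 2) ^+ 2 = (b ^+ 2 + 2 * b * q + q ^+ 2) / 4 by field.
by rewrite hq2; field.
Qed.

End RealFacts.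

Section Subgradients.
Variables (R : realType) (n : nat).
Implicit Types (f g : 'rV[R]_n -> \bar R) (u v w yt : 'rV[R]_n).

Lemma eps_subdiff_fin f e yt u :
  proper_fun f -> eps_subdiff f e yt u -> f yt \is a fin_num.
Proof.
case=> hni [w0 hw0] hs; move: (hni yt) (hs w0).
case: (f yt) => [r| |] //= _.
rewrite addye // leye_eq => /eqP h.
by rewrite h in hw0.
Qed.

(* For a [mu]-strongly convex [g], a subgradient inequality holds with the
   extra quadratic term [mu/2 |w - yt|^2]: apply the subgradient inequality
   at [yt + t (w - yt)], compare with strong convexity, divide by [t] and
   let [t -> 0]. *)
Lemma strongly_convex_subgrad g mu yt u w : 0 < mu ->
  proper_fun g -> strongly_convex mu g -> eps_subdiff g 0 yt u ->
  g w \is a fin_num ->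
  fine (g yt) + ip u (w - yt) + mu / 2 * nrm (w - yt) ^+ 2 <= fine (g w).
Proof.
move=> hmu hp hsc hs hw.
have hy := eps_subdiff_fin hp hs.
set Gy := fine (g yt); set Gw := fine (g w); set N := nrm (w - yt).
suff : mu / 2 * N ^+ 2 <= Gw - Gy - ip u (w - yt) by lra.
apply: le_of_forall_scaled.
  by apply: mulr_ge0; [apply: divr_ge0; lra | apply: sqr_ge0].
move=> t /andP[t0 t1].
have hconv := hsc w yt t; rewrite ltW //= t1 in hconv; have {}hconv := hconv isT.
have hsub := hs (t *: w + (1 - t) *: yt).
have hdir : t *: w + (1 - t) *: yt - yt = t *: (w - yt).
  by apply/rowP => i; rewrite !mxE; ring.
rewrite hdir ipZr subr0 in hsub.
rewrite -(fineK hw) -(fineK hy) -/Gw -/Gy -!EFinM -!EFinD in hconv.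
rewrite -(fineK hy) -/Gy -EFinD in hsub.
have := le_trans hsub hconv; rewrite lee_fin -/N => hlin.
have : 0 <= t * ((Gw - Gy - ip u (w - yt)) - mu / 2 * N ^+ 2 * (1 - t)) by lra.
rewrite pmulr_rge0 //; lra.
Qed.

(* The value of [f + g] at [z] as a real number; it is the actual value on
   the domain of [f + g], which is where it is used. *)
Definition sum_value f g (z : 'rV[R]_n) : R := fine (f z + g z)%E.

Lemma sum_subdiff_lower_model f g mu e yt v w : 0 < mu ->
  proper_fun f -> proper_fun g -> strongly_convex mu g ->
  in_sum_subdiff f g e yt v -> (f w + g w)%E \is a fin_num ->
  sum_value f g yt + ip v (w - yt) - e + mu / 2 * nrm (w - yt) ^+ 2
    <= sum_value f g w.
Proof.
move=> hmu hpf hpg hsc [u1 [u2 [h1 [h2 ->]]]].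
rewrite fin_numD => /andP[fw gw].
have fy := eps_subdiff_fin hpf h1; have gy := eps_subdiff_fin hpg h2.
have hg := strongly_convex_subgrad hmu hpg hsc h2 gw.
have := h1 w; rewrite -(fineK fw) -(fineK fy) -EFinD lee_fin => hf.
rewrite /sum_value !fineD // ipDl; lra.
Qed.

Lemma proper_sum_notfin f g z : proper_fun f -> proper_fun g ->
  ~~ ((f z + g z)%E \is a fin_num) -> (f z + g z = +oo)%E.
Proof.
move=> [hf _] [hg _]; move: (hf z) (hg z).
by case: (f z) => [r| |]; case: (g z) => [s| |].
Qed.

Lemma minimizer_fin f g (zs : 'rV[R]_n) : proper_fun f -> proper_fun g ->
  (exists z, (f z + g z)%E \is a fin_num) ->
  (forall z, (f zs + g zs <= f z + g z)%E) -> (f zs + g zs)%E \is a fin_num.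
Proof.
move=> [hf _] [hg _] [z hz] /(_ z); move: hz (hf zs) (hg zs).
case: (f z + g z)%E => [e| |] //.
by case: (f zs) => [r| |] //; case: (g zs) => [s| |].
Qed.

End Subgradients.

(* With
   [xt] and the new centre [xn] given by the update rules of Algorithm 1
   and [a^2 = lam (a (1 + 2 mu A) + (1 + mu A) A)] (the equation defining
   [a]), this weighted sum of inner products vanishes identically. *)
Lemma one_step_identity (R : realType) (n : nat) (mu A a lam : R)
    (x y yt v z xt xn : 'rV[R]_n) :
  0 < lam -> 0 < a -> 0 <= A -> 0 < mu ->
  a ^+ 2 = lam * (a * (1 + 2 * mu * A) + (1 + mu * A) * A) ->
  xt = ((a - mu * A * lam) / (A + a)) *: x + ((A + mu * A * lam) / (A + a)) *: y ->
  xn = ((1 + mu * A) / (1 + mu * (A + a))) *: x + (mu * a / (1 + mu * (A + a))) *: yt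
       - (a / (1 + mu * (A + a))) *: v ->
  (- A) * ip v (y - yt) + (- a) * ip v (z - yt)
  + ((A + a) / (2 * lam)) * ip (yt - xt) (yt - xt)
  + (- ((A + a) / (2 * lam * (1 + lam * mu)))) * ip (lam *: v + yt - xt) (lam *: v + yt - xt)
  + (- (mu * A / 2)) * ip (y - yt) (y - yt)
  + (- (mu * a / 2)) * ip (z - yt) (z - yt)
  + (mu * (1 + mu * A) * lam * A / (2 * a)) * ip (x - y) (x - y)
  + ((1 + mu * (A + a)) / 2) * ip (z - xn) (z - xn)
  + (- ((1 + mu * A) / 2)) * ip (z - x) (z - x) = 0.
Proof.
move=> hl ha hA hm hrel -> ->.
have hmA : 0 <= mu * A by apply: mulr_ge0; lra.
have hD : 0 < a * (1 + 2 * mu * A) + (1 + mu * A) * A.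
  have : 0 <= (1 + mu * A) * A by apply: mulr_ge0; lra.
  have : 0 < a * (1 + 2 * mu * A) by apply: mulr_gt0; lra.
  lra.
have -> : lam = a ^+ 2 / (a * (1 + 2 * mu * A) + (1 + mu * A) * A).
  by rewrite hrel mulrK // unitfE gt_eqF.
rewrite /ip !mulr_sumr -!big_split /= big1 // => i _; rewrite !mxE.
field.
have ha2mu : 0 < a ^+ 2 * mu by apply: mulr_gt0 => //; apply: exprn_gt0.
have hmAa : 0 < mu * (A + a) by apply: mulr_gt0 => //; lra.
by rewrite !gt_eqF //=; lra.
Qed.

Lemma scaled_error_bound (R : realType) (c lam mu s e M Rr : R) :
  0 < lam -> 0 < 1 + lam * mu -> 0 <= c ->
  M / (1 + lam * mu) + 2 * lam * e <= s ^+ 2 * Rr ->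
  c * e <= c / (2 * lam) * s ^+ 2 * Rr - c / (2 * lam * (1 + lam * mu)) * M.
Proof.
move=> hl hlm hc herr.
have hc' : 0 <= c / (2 * lam) by apply: divr_ge0; lra.
have := ler_wpM2l hc' herr; rewrite mulrDr.
have -> : c / (2 * lam) * (M / (1 + lam * mu)) = c / (2 * lam * (1 + lam * mu)) * M.
  by field; rewrite !gt_eqF.
have -> : c / (2 * lam) * (2 * lam * e) = c * e by field; rewrite gt_eqF.
rewrite mulrA; lra.
Qed.

(* Arithmetic heart of the induction step: the potential bound at step [k]
   (hypothesis 1), the two lower models at [y_k] and at [z] weighted by
   [A_k] and [a_{k+1}] (hypotheses 2, 3), the error criterion (4) and the
   energy identity (5) add up to the potential bound at step [k+1]. *)
Lemma potential_step_arith (R : realType)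
    (Ak ak lk sg mu ek Hy Hyt Hz S1 S2 Zx Zn N0 Pxy Rr M Py Pz ipvy ipvz : R) :
  0 < lk ->
  Ak * (Hy - Hz) + ((1 - sg ^+ 2) / 2 * S1 + S2 + (1 + mu * Ak) / 2 * Zx) <= 1 / 2 * N0 ->
  Ak * (Hyt + ipvy - ek + mu / 2 * Py) <= Ak * Hy ->
  ak * (Hyt + ipvz - ek + mu / 2 * Pz) <= ak * Hz ->
  (Ak + ak) * ek <= (Ak + ak) / (2 * lk) * sg ^+ 2 * Rr
                    - (Ak + ak) / (2 * lk * (1 + lk * mu)) * M ->
  (- Ak) * ipvy + (- ak) * ipvz + ((Ak + ak) / (2 * lk)) * Rr
  + (- ((Ak + ak) / (2 * lk * (1 + lk * mu)))) * M
  + (- (mu * Ak / 2)) * Py + (- (mu * ak / 2)) * Pz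
  + (mu * (1 + mu * Ak) * lk * Ak / (2 * ak)) * Pxy
  + ((1 + mu * (Ak + ak)) / 2) * Zn + (- ((1 + mu * Ak) / 2)) * Zx = 0 ->
  (Ak + ak) * (Hyt - Hz) + ((1 - sg ^+ 2) / 2 * (S1 + (Ak + ak) / lk * Rr)
   + (S2 + mu * (1 + mu * Ak) * lk * Ak / (2 * ak) * Pxy)
   + (1 + mu * (Ak + ak)) / 2 * Zn) <= 1 / 2 * N0.
Proof.
move=> hl.
have -> : (Ak + ak) / lk = 2 * ((Ak + ak) / (2 * lk)) by field; rewrite gt_eqF.
move: ((Ak + ak) / (2 * lk)) ((Ak + ak) / (2 * lk * (1 + lk * mu)))
  (mu * (1 + mu * Ak) * lk * Ak / (2 * ak)) => c1 c2 c3.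
move=> IH Ly Lz E K; nra.
Qed.

Section Algorithm1.
Variables (R : realType) (n : nat) (f g : 'rV[R]_n -> \bar R) (mu sigma : R).
Variables (x y xt v : nat -> 'rV[R]_n) (eps lam a A : nat -> R).
Hypotheses (hmu : 0 < mu) (hf_proper : proper_fun f) (hg_proper : proper_fun g).
Hypothesis hg_strong : strongly_convex mu g.
Hypothesis halg : algorithm1 f g mu sigma x y xt v eps lam a A.

Local Notation objective z := (f z + g z)%E.
Local Notation res_sum k :=
  (\sum_(1 <= j < k.+1) A j / lam j * nrm (y j - xt j.-1) ^+ 2).
Local Notation gap_sum k :=
  (\sum_(1 <= j < k.+1) mu * (1 + mu * A j.-1) * lam j * A j.-1 / (2 * a j)
                         * nrm (x j.-1 - y j.-1) ^+ 2).
Local Notation potential k z :=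
  (A k * (sum_value f g (y k) - sum_value f g z)
   + ((1 - sigma ^+ 2) / 2 * res_sum k + gap_sum k
      + (1 + mu * A k) / 2 * nrm (z - x k) ^+ 2)).

Lemma step_weight k : 0 <= A k -> 0 < a k.+1 /\
  a k.+1 ^+ 2 = lam k.+1 * (a k.+1 * (1 + 2 * mu * A k) + (1 + mu * A k) * A k).
Proof.
move=> hA; have [hl [ha _ _ _ _]] := halg.2.2 k.
have hmA : 0 <= mu * A k by apply: mulr_ge0; [exact: ltW | exact: hA].
have hb : 0 < (1 + 2 * mu * A k) * lam k.+1 by apply: mulr_gt0 => //; lra.
have hc : 0 <= (1 + mu * A k) * A k * lam k.+1.
  by apply: mulr_ge0; [apply: mulr_ge0; lra | exact: ltW].
rewrite (_ : (1 + 2 * mu * A k) ^+ 2 * lam k.+1 ^+ 2 + 4 * (1 + mu * A k) * A k * lam k.+1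
           = ((1 + 2 * mu * A k) * lam k.+1) ^+ 2
             + 4 * ((1 + mu * A k) * A k * lam k.+1)) in ha; last by ring.
have [-> ->] := quadratic_root hb hc ha; split=> //; ring.
Qed.

Lemma A_ge0 k : 0 <= A k.
Proof.
elim: k => [|k ih]; first by rewrite halg.2.1.
have [_ [_ _ _ -> _]] := halg.2.2 k; have := (step_weight ih).1; lra.
Qed.

Lemma A_gt0 k : (1 <= k)%N -> 0 < A k.
Proof.
case: k => // k _; have [_ [_ _ _ -> _]] := halg.2.2 k.
have := (step_weight (A_ge0 k)).1; have := A_ge0 k; lra.
Qed.

Lemma objective_iterate_fin k : objective (y k.+1) \is a fin_num.
Proof.
have [_ [_ _ [[u1 [u2 [h1 [h2 _]]]] _ _] _ _]] := halg.2.2 k.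
by rewrite fin_numD (eps_subdiff_fin hf_proper h1) (eps_subdiff_fin hg_proper h2).
Qed.

Lemma lower_model_at_previous k :
  A k * (sum_value f g (y k.+1) + ip (v k.+1) (y k - y k.+1) - eps k.+1
         + mu / 2 * nrm (y k - y k.+1) ^+ 2) <= A k * sum_value f g (y k).
Proof.
case: k => [|k]; first by rewrite halg.2.1 !mul0r.
apply: ler_wpM2l; first exact: A_ge0.
have [_ [_ _ [hsub _ _] _ _]] := halg.2.2 k.+1.
exact: sum_subdiff_lower_model hmu hf_proper hg_proper hg_strong hsub
         (objective_iterate_fin k).
Qed.

Lemma potential_step k z : objective z \is a fin_num ->
  potential k z <= 1 / 2 * nrm (z - x 0%N) ^+ 2 ->
  potential k.+1 z <= 1 / 2 * nrm (z - x 0%N) ^+ 2.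
Proof.
move=> hz IH; rewrite !(big_nat_recr k.+1) //=.
have [hl [_ hxt [hsub _ herr] hAS hxS]] := halg.2.2 k.
have hA := A_ge0 k; have [ha hrel] := step_weight hA.
have Lz := ler_wpM2l (ltW ha)
  (sum_subdiff_lower_model hmu hf_proper hg_proper hg_strong hsub hz).
have hlm : 0 < 1 + lam k.+1 * mu by have := mulr_gt0 hl hmu; lra.
have hAa : 0 <= A k + a k.+1 by lra.
have E := scaled_error_bound hl hlm hAa herr.
rewrite hAS in hxS.
have K := one_step_identity z hl ha hA hmu hrel hxt hxS; rewrite -!nrm_sqr in K.
rewrite hAS; exact: potential_step_arith hl IH (lower_model_at_previous k) Lz E K.
Qed.

Lemma potential_bound k z : objective z \is a fin_num ->
  potential k z <= 1 / 2 * nrm (z - x 0%N) ^+ 2.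
Proof.
move=> hz; elim: k => [|k IH]; last exact: potential_step.
rewrite halg.2.1 !big_geq //; lra.
Qed.

Lemma gap_sum_ge0 k : 0 <= gap_sum k.
Proof.
rewrite big_nat_cond; apply: sumr_ge0 => j /andP[/andP[hj _] _].
case: j hj => // j _ /=.
have [hl _] := halg.2.2 j; have hA := A_ge0 j; have [ha _] := step_weight hA.
have hmA := mulr_ge0 (ltW hmu) hA.
apply: mulr_ge0 _ (sqr_ge0 _); apply: divr_ge0; last by apply: mulr_ge0; lra.
apply: mulr_ge0 _ hA; apply: mulr_ge0 _ (ltW hl); apply: mulr_ge0 (ltW hmu) _.
lra.
Qed.

(* Part (a) of the proposition, for every reference point [z]: outside the
   domain of [h] the left-hand side is [-oo]. *)
Lemma potential_bound_ereal k z : (1 <= k)%N ->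
  ((A k)%:E * (objective (y k) - objective z) +
   ((1 - sigma ^+ 2) / 2 * res_sum k + gap_sum k
    + (1 + mu * A k) / 2 * nrm (z - x k) ^+ 2)%:E
   <= (1 / 2 * nrm (z - x 0%N) ^+ 2)%:E)%E.
Proof.
move=> hk1.
have hy : objective (y k) \is a fin_num.
  by case: k hk1 => // k _; exact: objective_iterate_fin.
have [hz | hz] := boolP (objective z \is a fin_num).
  rewrite -(fineK hy) -(fineK hz) -EFinB -EFinM -EFinD lee_fin.
  exact: potential_bound.
rewrite (proper_sum_notfin hf_proper hg_proper hz) -(fineK hy) /=.
by rewrite gt0_muleNy ?lte_fin ?A_gt0 // addNye leNye.
Qed.

Lemma residual_sum_bound (xs : 'rV[R]_n) :
  (exists z, objective z \is a fin_num) ->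
  (forall z, (objective xs <= objective z)%E) ->
  sigma < 1 -> forall k, (1 <= k)%N ->
  res_sum k <= nrm (xs - x 0%N) ^+ 2 / (1 - sigma ^+ 2).
Proof.
move=> hdom hmin hs1 k hk1.
have hxs := minimizer_fin hf_proper hg_proper hdom hmin.
have hy : objective (y k) \is a fin_num.
  by case: k hk1 => // k _; exact: objective_iterate_fin.
have hbound := potential_bound k hxs.
have hgap := gap_sum_ge0 k.
have hdist : 0 <= (1 + mu * A k) / 2 * nrm (xs - x k) ^+ 2.
  apply: mulr_ge0 _ (sqr_ge0 _); have := mulr_ge0 (ltW hmu) (A_ge0 k); lra.
have hval : 0 <= A k * (sum_value f g (y k) - sum_value f g xs).
  by apply: mulr_ge0 (A_ge0 k) _; rewrite subr_ge0; exact: fine_le.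
have hs : 0 < 1 - sigma ^+ 2.
  by have /andP[hs0 _] := halg.1; nra.
rewrite ler_pdivlMr //; move: hbound hgap hdist hval hs.
move: (res_sum k) (gap_sum k) (nrm (xs - x 0%N) ^+ 2) => S1 S2 N0.
move: (A k * _) ((1 + mu * A k) / 2 * _) => T U; lra.
Qed.

End Algorithm1.

Theorem proposition2p4 (R : realType) (n : nat) (f g : 'rV[R]_n -> \bar R) (mu : R)
  (hf_proper : proper_fun f) (hf_closed : closed_fun f) (hf_convex : convex_fun f)
  (hg_proper : proper_fun g) (hg_closed : closed_fun g) (hg_convex : convex_fun g)
  (hmu : 0 < mu) (hg_strong : strongly_convex mu g)
  (hdom : exists x, (f x + g x)%E \is a fin_num)
  (xstar : 'rV[R]_n) (hxstar : forall x, (f xstar + g xstar <= f x + g x)%E)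
  (sigma : R) (x y xt v : nat -> 'rV[R]_n) (eps lam a A : nat -> R)
  (halg : algorithm1 f g mu sigma x y xt v eps lam a A) :
  (forall (k : nat) (z : 'rV[R]_n), (1 <= k)%N ->
     ((A k)%:E * ((f (y k) + g (y k)) - (f z + g z)) +
      ((1 - sigma ^+ 2) / 2 *
         (\sum_(1 <= j < k.+1) A j / lam j * nrm (y j - xt j.-1) ^+ 2)
       + \sum_(1 <= j < k.+1)
           mu * (1 + mu * A j.-1) * lam j * A j.-1 / (2 * a j)
             * nrm (x j.-1 - y j.-1) ^+ 2
       + (1 + mu * A k) / 2 * nrm (z - x k) ^+ 2)%:E
      <= (1 / 2 * nrm (z - x 0%N) ^+ 2)%:E)%E)
  /\
  (sigma < 1 -> forall k : nat, (1 <= k)%N ->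
     \sum_(1 <= j < k.+1) A j / lam j * nrm (y j - xt j.-1) ^+ 2
       <= nrm (xstar - x 0%N) ^+ 2 / (1 - sigma ^+ 2)).
Proof.
split.
- exact: potential_bound_ereal hmu hf_proper hg_proper hg_strong halg.
- move=> hs1 k hk1.
  exact: (residual_sum_bound hmu hf_proper hg_proper hg_strong halg hdom hxstar hs1 hk1).
Qed.
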